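(* Let $X$ be a Banach space as described in the context, let $f\in X$ with $f(z)=\sum_{k=0}^\infty c_kz^k$ in $\mathbb{D}$, and assume $\lim_{n\to\infty}\|f-S_n(f)\|=0$, where $S_n(f)(z)=\sum_{k=0}^{n}c_kz^k$ is the $n$-th partial sum of the Taylor series of $f$. Then there exists a sequence $p_n\in\mathcal{P}_n[\mathbb{Z}]$ with $\lim_{n\to\infty}\|f-p_n\|=0$ if and only if all coefficients $c_k$ are integers.
   Context: $\mathbb{D}=\{z\in\mathbb{C}:|z|<1\}$. $X$ is a complex Banach space of functions analytic in $\mathbb{D}$ whose norm $\|\cdot\|$ satisfies: (i) $\|f(\cdot\, e^{it})\|=\|f(\cdot)\|$ for all $t\in\mathbb{R}$ and $f\in X$; (ii) $\|f\|<\infty$ for every entire function $f$; (iii) for all $f\in X$ and $g\in L[0,2\pi]$, $\big\|\frac{1}{2\pi}\int_0^{2\pi} f(ze^{it})g(t)\,dt\big\|\le \frac{1}{2\pi}\int_0^{2\pi}|g(t)|\,dt\cdot\|f\|$. A complex number is called an integer if its real and imaginary parts are integers; $\mathcal{P}_n[\mathbb{Z}]$ is the set of complex polynomials of degree at most $n-1$ with integer coefficients in this sense. *)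

From HB Require Import structures.
From mathcomp Require Import all_boot all_order all_algebra.
From mathcomp Require Export complex.
From mathcomp Require Export all_classical all_reals all_analysis.
Export Order.TTheory GRing.Theory Num.Theory.
Export numFieldNormedType.Exports.

Set Implicit Arguments.
Unset Strict Implicit.
Unset Printing Implicit Defensive.

Local Open Scope ring_scope.
Local Open Scope complex_scope.
Local Open Scope classical_set_scope.

Section Defs.
Context {R : realType}.
Local Notation C := (R[i]).

Definition unit_disk : set C := [set z | `|z| < 1].

Definition cabs (z : C) : R := complex.Re `|z|.

(* f is complex-differentiable (holomorphic / analytic) at every point of A *)
Definition holomorphic_on (A : set C) (f : C -> C) : Prop :=
  forall z, A z -> derivable (f : C^o -> C^o) z 1.

Definition entire (f : C -> C) : Prop := forall z : C, derivable (f : C^o -> C^o) z 1.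

Definition expi (t : R) : C := (cos t) +i* (sin t).

Definition two_pi : R := pi *+ 2.

Definition I02pi : set R := `[0, two_pi]%classic.

Definition cintegrable (g : R -> C) : Prop :=
  (@lebesgue_measure R).-integrable I02pi (EFin \o (fun t => complex.Re (g t))) /\
  (@lebesgue_measure R).-integrable I02pi (EFin \o (fun t => complex.Im (g t))).

Definition cintegral (h : R -> C) : C :=
  (Rintegral (@lebesgue_measure R) I02pi (fun t => complex.Re (h t))) +i*
  (Rintegral (@lebesgue_measure R) I02pi (fun t => complex.Im (h t))).

(* X (given by its carrier Xs, a set of functions, whose elements are
   considered as functions on the unit disk) with norm N is a complex Banach
   space of functions analytic in D satisfying (i), (ii), (iii). *)
Record admissible_space (Xs : set (C -> C)) (N : (C -> C) -> R) : Prop := {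
  adm_analytic : forall f, Xs f -> holomorphic_on unit_disk f;
  (* elements of X are functions on D: only values on D matter *)
  adm_ext : forall f g, Xs f -> (forall z, unit_disk z -> f z = g z) ->
      Xs g /\ N g = N f;
  adm_zero : Xs (fun _ => 0);
  adm_add : forall f g, Xs f -> Xs g -> Xs (fun z => f z + g z);
  adm_scale : forall (a : C) f, Xs f -> Xs (fun z => a * f z);
  adm_norm_ge0 : forall f, Xs f -> 0 <= N f;
  adm_norm_eq0 : forall f, Xs f -> N f = 0 -> forall z, unit_disk z -> f z = 0;
  adm_normZ : forall (a : C) f, Xs f -> N (fun z => a * f z) = cabs a * N f;
  adm_normD : forall f g, Xs f -> Xs g -> N (fun z => f z + g z) <= N f + N g;
  adm_complete : forall u : nat -> C -> C, (forall n, Xs (u n)) ->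
      (forall e : R, 0 < e -> exists M : nat, forall m n : nat, (M <= m)%N -> (M <= n)%N ->
          N (fun z => u m z - u n z) < e) ->
      exists2 g, Xs g & (fun n => N (fun z => u n z - g z)) @ \oo --> (0 : R);
  adm_rot : forall f (t : R), Xs f ->
      Xs (fun z => f (z * expi t)) /\ N (fun z => f (z * expi t)) = N f;
  adm_entire : forall f, entire f -> Xs f;
  adm_conv : forall f (g : R -> C), Xs f -> cintegrable g ->
      Xs (fun z => (two_pi^-1)%:C * cintegral (fun t => f (z * expi t) * g t)) /\
      N (fun z => (two_pi^-1)%:C * cintegral (fun t => f (z * expi t) * g t))
        <= two_pi^-1 * Rintegral (@lebesgue_measure R) I02pi (fun t => cabs (g t)) * N f
}.

Definition cint (z : C) : Prop := complex.Re z \is a Num.int /\ complex.Im z \is a Num.int.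

(* P_n[Z]: polynomials of degree at most n-1 with integer coefficients *)
Definition PnZ (n : nat) (p : {poly C}) : Prop :=
  (size p <= n)%N /\ forall k : nat, cint p`_k.

Definition partial_sum (c : nat -> C) (n : nat) : C -> C :=
  fun z => \sum_(k < n.+1) c k * z ^+ k.

End Defs.

From HB Require Import structures.
From mathcomp Require Import all_boot all_order all_algebra.
From mathcomp Require Import complex.
From mathcomp Require Import all_classical all_reals all_analysis.
From mathcomp Require Import ring lra zify.
Import Order.TTheory GRing.Theory Num.Theory.
Import numFieldNormedType.Exports.
Local Open Scope ring_scope.
Local Open Scope complex_scope.
Local Open Scope classical_set_scope.

(* For every polynomial q, rotation invariance (i) and the triangle inequality give
   |q_k| N(z^k) <= N(q): with w a primitive m-th root of unity, m > deg q, k,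
   averaging the rotations q(z w^j) against the weights w^((m-k) j) = w^(-k j)
   leaves exactly m q_k z^k.  So if integer polynomials p_n and the Taylor sections
   S_n both approximate f, then N(S_n - p_n) -> 0 forces the k-th coefficients of
   p_n to converge to c_k, and a limit of Gaussian integers is a Gaussian integer.
   Conversely, the sections S_(n-1) themselves lie in P_n[Z]. *)

Set Implicit Arguments.
Unset Strict Implicit.

Section PrimitiveRootSums.
Variables (F : idomainType) (m : nat) (w : F).
Hypothesis prim_w : m.-primitive_root w.

Lemma sum_prim_root_exprM i :
  \sum_(j < m) w ^+ (i * j) = if (m %| i)%N then m%:R else 0.
Proof.
under eq_bigr do rewrite exprM.
rewrite (prim_order_dvd prim_w); case: eqP => [->|/eqP wi1].
  by under eq_bigr do rewrite expr1n; rewrite sumr_const card_ord.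
have := subrX1 (w ^+ i) m.
rewrite -exprM mulnC exprM (prim_expr_order prim_w) expr1n subrr => /esym/eqP.
by rewrite mulf_eq0 subr_eq0 (negbTE wi1) => /eqP.
Qed.

Lemma sum_prim_root_horner (q : {poly F}) k z :
  (size q <= m)%N -> (k < m)%N ->
  \sum_(j < m) w ^+ ((m - k) * j) * q.[z * w ^+ j] = m%:R * q`_k * z ^+ k.
Proof.
move=> szq ltkm.
under eq_bigr do rewrite (horner_coef_wide _ szq) mulr_sumr.
rewrite exchange_big /=.
transitivity (\sum_(l < m) q`_l * z ^+ l * \sum_(j < m) w ^+ ((m - k + l) * j)).
  apply: eq_bigr => l _; rewrite mulr_sumr; apply: eq_bigr => j _.
  by rewrite mulnDl exprD exprMn -!exprM [(j * l)%N]mulnC; ring.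
rewrite (bigD1 (Ordinal ltkm)) //= [X in _ + X]big1 => [|l neq_lk].
  by rewrite subnK 1?ltnW // sum_prim_root_exprM dvdnn addr0 mulrC mulrA.
rewrite sum_prim_root_exprM ifN ?mulr0 //; apply/negP => /dvdnP[d].
by move: neq_lk (ltn_ord l); rewrite -val_eqE /= => /eqP; case: d => [|[|d]]; lia.
Qed.

End PrimitiveRootSums.

Section ComplexExponential.
Variable R : realType.

Lemma expiD (a b : R) : expi (a + b) = expi a * expi b.
Proof. by rewrite /expi cosD sinD; apply/eqP; rewrite eq_complex /= eqxx addrC eqxx. Qed.

Lemma expi_natmul (t : R) n : expi (t *+ n) = expi t ^+ n.
Proof.
elim: n => [|n IHn]; first by rewrite /expi cos0 sin0.
by rewrite mulrSr expiD IHn exprSr.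
Qed.

Lemma expi_two_pi : expi (two_pi : R) = 1.
Proof. by rewrite /expi /two_pi cos2pi sin2pi. Qed.

Lemma expi_neq1 (t : R) : 0 < t < two_pi -> expi t != 1.
Proof.
case/andP => t_gt0 t_lt2pi; apply/negP => /eqP[cos_t _].
have sin_gt0 : 0 < sin (t / 2).
  by apply: sin_gt0_pi; rewrite divr_gt0 //= ltr_pdivrMr // mulr_natr.
have : cos t = 1 - sin (t / 2) ^+ 2 *+ 2.
  by rewrite {1}[t]splitr -mulr2n cos_mulr2n cos2sin2; ring.
by rewrite cos_t; nra.
Qed.

Lemma prim_root_expi m : (0 < m)%N -> m.-primitive_root (expi (two_pi / m%:R : R)).
Proof.
move=> m_gt0; have m_neq0 : m%:R != 0 :> R by rewrite pnatr_eq0 -lt0n.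
have expi_m : expi (two_pi / m%:R : R) ^+ m = 1.
  by rewrite -expi_natmul -[_ *+ m]mulr_natr divfK // expi_two_pi.
case: (prim_order_exists m_gt0 expi_m) => d prim_d d_dvd_m.
suff d_eq_m : d = m by move: prim_d; rewrite d_eq_m.
have d_gt0 := prim_order_gt0 prim_d; have d_le_m := dvdn_leq m_gt0 d_dvd_m.
apply/eqP; rewrite eqn_leq d_le_m /= leqNgt; apply/negP => d_lt_m.
have two_pi_gt0 : (0 : R) < two_pi by rewrite /two_pi pmulrn_lgt0 // pi_gt0.
move: (prim_expr_order prim_d); rewrite -expi_natmul; apply/eqP/expi_neq1.
rewrite -[_ *+ d]mulr_natr mulrAC divr_gt0 ?mulr_gt0 ?ltr0n //=.
by rewrite ltr_pdivrMr ?ltr0n // ltr_pM2l // ltr_nat.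
Qed.

End ComplexExponential.

Section ComplexModulus.
Variable R : realType.
Implicit Types z : R[i].

Lemma norm_cabs z : `|z| = (cabs z)%:C.
Proof. by rewrite /cabs normc_def. Qed.

Lemma cabsE z : cabs z = Num.sqrt (complex.Re z ^+ 2 + complex.Im z ^+ 2).
Proof. by rewrite /cabs normc_def. Qed.

Lemma cabs_ge0 z : 0 <= cabs z.
Proof. by rewrite cabsE sqrtr_ge0. Qed.

Lemma cabsM (a b : R[i]) : cabs (a * b) = cabs a * cabs b.
Proof. by rewrite {1}/cabs normrM !norm_cabs -rmorphM. Qed.

Lemma cabs_nat n : cabs (n%:R : R[i]) = n%:R.
Proof. by rewrite {1}/cabs normr_nat -(rmorph_nat (real_complex R)). Qed.

Lemma cabsN1 : cabs (-1 : R[i]) = 1.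
Proof. by rewrite {1}/cabs normrN1. Qed.

Lemma cabs_expi (t : R) : cabs (expi t) = 1.
Proof. by rewrite cabsE /= cos2Dsin2 sqrtr1. Qed.

Lemma Re_le_cabs z : `|complex.Re z| <= cabs z.
Proof.
by rewrite cabsE -sqrtr_sqr ler_sqrt ?addr_ge0 ?sqr_ge0 // lerDl sqr_ge0.
Qed.

Lemma Im_le_cabs z : `|complex.Im z| <= cabs z.
Proof.
by rewrite cabsE -sqrtr_sqr ler_sqrt ?addr_ge0 ?sqr_ge0 // lerDr sqr_ge0.
Qed.

End ComplexModulus.

Section IntegerLimits.
Variable R : realType.

Lemma int_limit (u : nat -> R) (r : R) :
  (forall n, u n \is a Num.int) -> u @ \oo --> r -> r \is a Num.int.
Proof.
move=> u_int u_r; have /cvgrPdist_lt/(_ (1 / 2))[|M _ u_near] := u_r; first lra.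
have u_eq n : (M <= n)%N -> u n = u M.
  move=> le_Mn; have := u_near n le_Mn; have := u_near M (leqnn M) => r_uM r_un.
  have : `|u n - u M| < 1.
    by have := ler_distD r (u n) (u M); rewrite [`|u n - r|]distrC; lra.
  apply: contraTeq => neq; rewrite -leNgt norm_intr_ge1 ?rpredB //.
  by rewrite subr_eq0.
suff -> : r = u M by [].
have u_uM : u @ \oo --> u M by apply: cvg_near_cst; exists M => // n; exact: u_eq.
exact: (cvg_unique _ u_r u_uM).
Qed.

Lemma cint_limit (x : nat -> R[i]) (c : R[i]) :
  (forall n, cint (x n)) -> (fun n => cabs (c - x n)) @ \oo --> 0 -> cint c.
Proof.
move=> x_int x_c.
have part_cvg (P : R[i] -> R) : (forall z, `|P z| <= cabs z) ->
    (forall a b, P (a - b) = P a - P b) -> (fun n => P (x n)) @ \oo --> P c.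
  move=> P_le P_B; apply/cvgrPdist_lt => e e_gt0.
  move/cvgrPdist_lt/(_ e e_gt0): x_c; apply: filterS => n.
  by rewrite sub0r normrN [`|cabs _|]ger0_norm ?cabs_ge0 // -P_B; exact: le_lt_trans.
split.
- apply: (int_limit (fun n => (x_int n).1)).
  by apply: part_cvg => [|[a1 a2] [b1 b2]] //; exact: Re_le_cabs.
- apply: (int_limit (fun n => (x_int n).2)).
  by apply: part_cvg => [|[a1 a2] [b1 b2]] //; exact: Im_le_cabs.
Qed.

End IntegerLimits.

Lemma entire_horner (R : realType) (q : {poly R[i]}) : entire (horner q).
Proof.
move=> z; elim/poly_ind: q => [|q a IHq].
  rewrite (_ : horner 0 = cst 0); first exact: (@derivable_cst R[i] R[i]^o R[i]^o).
  by apply/funext => x; rewrite horner0.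
rewrite (_ : horner _ = (fun x => q.[x] * x) \+ cst a); last first.
  by apply/funext => x; rewrite !hornerE.
apply: (@derivableD R[i] R[i]^o R[i]^o); last exact: (@derivable_cst R[i] R[i]^o R[i]^o).
exact: (@derivableM R[i] R[i]^o (horner q) id z 1 IHq (@derivable_id R[i] R[i]^o z 1)).
Qed.

Section AdmissibleSpace.
Variable R : realType.
Local Notation C := R[i].
Variables (Xs : set (C -> C)) (N : (C -> C) -> R).
Hypothesis X_adm : admissible_space Xs N.

Lemma adm_horner (q : {poly C}) : Xs (horner q).
Proof. exact/(adm_entire X_adm)/entire_horner. Qed.

Lemma adm_norm0 : N (fun=> 0) = 0.
Proof.
have -> : (fun=> 0) = (fun _ : C => 0 * 0 : C) by apply/funext => z; rewrite mul0r.
by rewrite (adm_normZ X_adm _ (adm_zero X_adm)) {1}/cabs normr0 mul0r.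
Qed.

Let subE (g h : C -> C) : (fun z => g z - h z) = (fun z => g z + -1 * h z).
Proof. by apply/funext => z; rewrite mulN1r. Qed.

Lemma adm_sub (g h : C -> C) : Xs g -> Xs h -> Xs (fun z => g z - h z).
Proof. by move=> Xg Xh; rewrite subE; exact/(adm_add X_adm Xg)/(adm_scale X_adm). Qed.

Lemma adm_normB (g h : C -> C) : Xs g -> Xs h ->
  N (fun z => g z - h z) <= N g + N h.
Proof.
move=> Xg Xh; rewrite subE.
apply: le_trans (adm_normD X_adm Xg (adm_scale X_adm _ Xh)) _.
by rewrite (adm_normZ X_adm _ Xh) cabsN1 mul1r.
Qed.

Section FiniteSums.
Variables (a : nat -> C) (g : nat -> C -> C).
Hypothesis Xg : forall j, Xs (g j).

Let sum_recr n :
  (fun z => \sum_(j < n.+1) a j * g j z) =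
  (fun z => (\sum_(j < n) a j * g j z) + a n * g n z).
Proof. by apply/funext => z; rewrite big_ord_recr. Qed.

Let sum0 : (fun z => \sum_(j < 0) a j * g j z) = (fun=> 0).
Proof. by apply/funext => z; rewrite big_ord0. Qed.

Lemma adm_sum n : Xs (fun z => \sum_(j < n) a j * g j z).
Proof.
elim: n => [|n IHn]; first by rewrite sum0; exact: (adm_zero X_adm).
by rewrite sum_recr; exact/(adm_add X_adm IHn)/(adm_scale X_adm).
Qed.

Lemma adm_norm_sum n :
  N (fun z => \sum_(j < n) a j * g j z) <= \sum_(j < n) cabs (a j) * N (g j).
Proof.
elim: n => [|n IHn]; first by rewrite sum0 adm_norm0 big_ord0.
rewrite sum_recr big_ord_recr /=.
apply: le_trans (adm_normD X_adm (adm_sum n) (adm_scale X_adm _ (Xg n))) _.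
by rewrite (adm_normZ X_adm _ (Xg n)) lerD2r.
Qed.

End FiniteSums.

Lemma adm_pow k : Xs (fun z => z ^+ k).
Proof.
have -> : (fun z => z ^+ k) = horner ('X^k : {poly C}).
  by apply/funext => z; rewrite hornerXn.
exact: adm_horner.
Qed.

Lemma adm_norm_pow_gt0 k : 0 < N (fun z => z ^+ k).
Proof.
rewrite lt_def (adm_norm_ge0 X_adm (adm_pow k)) andbT.
apply/eqP => /(adm_norm_eq0 X_adm (adm_pow k))/(_ 2^-1).
have half_in_disk : unit_disk (2^-1 : C).
  by rewrite /unit_disk /= ger0_norm ?invr_ge0 ?ler0n // invf_lt1 ?ltr0n // ltr1n.
by move=> /(_ half_in_disk)/eqP; rewrite expf_eq0 invr_eq0 pnatr_eq0 andbF.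
Qed.

Lemma adm_coef_le (q : {poly C}) k :
  cabs q`_k * N (fun z => z ^+ k) <= N (horner q).
Proof.
pose m := maxn (size q) k.+1; have m_gt0 : (0 < m)%N by rewrite leq_max orbT.
pose t : R := two_pi / m%:R; pose w := expi t.
have prim_w : m.-primitive_root w := prim_root_expi R m_gt0.
pose g j := fun z => q.[z * expi (t *+ j)].
have Xg j : Xs (g j) := (adm_rot X_adm (t *+ j) (adm_horner q)).1.
have Ng j : N (g j) = N (horner q) := (adm_rot X_adm (t *+ j) (adm_horner q)).2.
pose a j := w ^+ ((m - k) * j).
have avg : (fun z => \sum_(j < m) a j * g j z) = (fun z => (m%:R * q`_k) * z ^+ k).
  apply/funext => z; rewrite -(sum_prim_root_horner prim_w) ?leq_maxl ?leq_maxr //.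
  by apply: eq_bigr => j _; rewrite /g expi_natmul.
have := adm_norm_sum a Xg m.
rewrite avg (adm_normZ X_adm _ (adm_pow k)) cabsM cabs_nat.
have a_unit j : cabs (a j) = 1 by rewrite /a /w -expi_natmul cabs_expi.
under eq_bigr do rewrite a_unit Ng mul1r.
by rewrite sumr_const card_ord -mulrA mulr_natl ler_pMn2r.
Qed.

Lemma adm_coef_cvg f (p q : nat -> {poly C}) k : Xs f ->
  (fun n => N (fun z => f z - (p n).[z])) @ \oo --> 0 ->
  (fun n => N (fun z => f z - (q n).[z])) @ \oo --> 0 ->
  (fun n => cabs ((q n)`_k - (p n)`_k)) @ \oo --> 0.
Proof.
move=> Xf f_p f_q; have K_gt0 := adm_norm_pow_gt0 k.
have bound n : cabs ((q n)`_k - (p n)`_k) <=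
    (N (fun z => f z - (p n).[z]) + N (fun z => f z - (q n).[z])) / N (fun z => z ^+ k).
  rewrite ler_pdivlMr // -coefB; apply: le_trans (adm_coef_le _ k) _.
  have -> : horner (q n - p n) = fun z => (f z - (p n).[z]) - (f z - (q n).[z]).
    by apply/funext => z; rewrite hornerD hornerN; ring.
  by apply: adm_normB; apply: adm_sub => //; exact: adm_horner.
have upper : (fun n => (N (fun z => f z - (p n).[z]) + N (fun z => f z - (q n).[z])) /
    N (fun z => z ^+ k)) @ \oo --> 0.
  by rewrite -(mul0r (N (fun z => z ^+ k))^-1) -(addr0 0); apply: cvgMr_tmp; exact: cvgD.
apply: (@squeeze_cvgr _ _ _ _ (fun=> 0) _ _ _ 0 (cvg_cst 0) upper).
by apply: nearW => n; rewrite cabs_ge0 bound.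
Qed.

End AdmissibleSpace.

Unset Implicit Arguments.

Theorem theorem5p3 (R : realType) (Xs : set (R[i] -> R[i])) (N : (R[i] -> R[i]) -> R)
  (f : R[i] -> R[i]) (c : nat -> R[i]) :
  admissible_space Xs N ->
  Xs f ->
  (forall z, unit_disk z -> (fun n => partial_sum c n z : R[i]^o) @ \oo --> (f z : R[i]^o)) ->
  (fun n => N (fun z => f z - partial_sum c n z)) @ \oo --> (0 : R) ->
  ((exists p : nat -> {poly R[i]}, (forall n, PnZ n (p n)) /\
      (fun n => N (fun z => f z - (p n).[z])) @ \oo --> (0 : R))
   <-> (forall k, cint (c k))).
Proof.
move=> X_adm Xf _; pose S n := \poly_(i < n.+1) c i.
have -> : (fun n => N (fun z => f z - partial_sum c n z)) =
          (fun n => N (fun z => f z - (S n).[z])).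
  by apply/funext => n; congr N; apply/funext => z; rewrite horner_poly.
move=> f_S; split=> [[p [p_int f_p]] k|c_int].
- apply: (cint_limit (x := fun n => (p n)`_k)) => [n|]; first exact: (p_int n).2.
  apply: cvg_trans (adm_coef_cvg X_adm k Xf f_p f_S).
  by apply: near_eq_cvg; exists k => // n /= le_kn; rewrite coef_poly ltnS le_kn.
- exists (fun n => \poly_(i < n) c i); split; last by rewrite -cvg_shiftS.
  move=> n; split=> [|j]; first exact: size_poly.
  by rewrite coef_poly; case: ifP => _; [exact: c_int|split; exact: rpred0].
Qed.
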